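(* Let $p\ne q$ be primes, $G=\mathbb{Z}_p^2\times\mathbb{Z}_q^2$, and $S\subseteq G$ with $\gcd(|S|,p^2q^2)=pq$ and $|S|\ge pq\min\{p,q\}$. Then $S$ is not spectral.
   Context: For $w=(u,v)\in G$ ($u\in\mathbb{Z}_p^2$, $v\in\mathbb{Z}_q^2$) define $\chi_w(a,b)=\exp\big(2\pi i(\tfrac{u\cdot a}{p}+\tfrac{v\cdot b}{q})\big)$ and $\chi(S)=\sum_{s\in S}\chi(s)$. $S$ is spectral if there is $\Lambda\subseteq G$ with $|\Lambda|=|S|$ and $\chi_{\lambda-\lambda'}(S)=0$ for all distinct $\lambda,\lambda'\in\Lambda$. *)

From HB Require Import structures.
From mathcomp Require Import all_boot all_order all_algebra all_field.
Set Implicit Arguments. Unset Strict Implicit. Unset Printing Implicit Defensive.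
Import Order.TTheory GRing.Theory Num.Theory.
Local Open Scope ring_scope.

(* zeta n = exp(2 pi i / n): n.-root (-1) is the n-th root of -1 of minimal
   nonnegative argument, i.e. exp(i pi / n) (for n > 1); its square is
   exp(2 pi i / n). *)
Definition zeta (n : nat) : algC := (n.-root (-1)) ^+ 2.

Notation G p q := (('Z_p * 'Z_p) * ('Z_q * 'Z_q))%type.

Definition chi (p q : nat) (w x : G p q) : algC :=
  zeta p ^+ (w.1.1 * x.1.1 + w.1.2 * x.1.2)%N *
  zeta q ^+ (w.2.1 * x.2.1 + w.2.2 * x.2.2)%N.

Definition chiS (p q : nat) (w : G p q) (S : {set G p q}) : algC :=
  \sum_(s in S) chi w s.

Definition spectral (p q : nat) (S : {set G p q}) : Prop :=
  exists Lam : {set G p q},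
    #|Lam| = #|S| /\
    (forall l l', l \in Lam -> l' \in Lam -> l != l' -> chiS (l - l') S = 0).

From mathcomp Require Import all_boot all_order all_algebra all_field ring.
Set Implicit Arguments. Unset Strict Implicit. Unset Printing Implicit Defensive.
Import Order.TTheory GRing.Theory Num.Theory.
Local Open Scope ring_scope.

(* Let L be a spectrum of S. If l, l' in L have the same Z_p^2-component,
   then chi_(l - l')(S) is a character sum of the projection of S to Z_q^2,
   evaluated at the nonzero frequency z = l.2 - l'.2.  More than q such
   frequencies in one fibre would contain, for every direction v != 0, two
   whose difference is a nonzero multiple d v of v; as zeta_q^d is a Galois
   conjugate of zeta_q, the coefficient at v vanishes too.  All nonzero
   Fourier coefficients of the projection would then vanish, forcing
   q^2 | |S|, which the gcd condition forbids.  Hence |L| <= p^2 q, and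
   symmetrically |L| <= q^2 p, so |S| = pq min(p, q); but then
   gcd(|S|, p^2 q^2) = |S| != pq. *)

(* z and z ^+ d have the same (cyclotomic) minimal polynomial over Q. *)
Lemma sum_prim_root_conj_eq0 n (z : algC) (I : finType) (A : {pred I})
    (e : I -> nat) d :
  n.-primitive_root z -> coprime d n ->
  \sum_(i in A) z ^+ (d * e i) = 0 -> \sum_(i in A) z ^+ e i = 0.
Proof.
move=> prim_z co_dn sum_zd0.
pose Q : {poly rat} := \sum_(i in A) 'X^(e i).
have evalQ (x : algC) : (map_poly ratr Q).[x] = \sum_(i in A) x ^+ e i.
  rewrite raddf_sum horner_sum; apply: eq_bigr => i _.
  by rewrite /= map_polyXn hornerXn.
have prim_zd : n.-primitive_root (z ^+ d) by rewrite prim_root_exp_coprime.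
have [P [defP _] rootP] := minCpolyP z.
have [Pd [defPd _] rootPd] := minCpolyP (z ^+ d).
have samePd : P = Pd.
  have : minCpoly z = minCpoly (z ^+ d).
    rewrite (minCpoly_cyclotomic prim_z) (minCpoly_cyclotomic prim_zd).
    by rewrite -(Cintr_Cyclotomic prim_z) -(Cintr_Cyclotomic prim_zd).
  by rewrite defP defPd => /map_poly_inj.
apply/eqP; rewrite -evalQ -/(root _ _) rootP samePd -rootPd /root evalQ.
by under eq_bigr do rewrite -exprM; rewrite sum_zd0.
Qed.

(* A natural-number exponent: only its residue mod r matters, as
   zeta r ^+ r = 1. *)
Definition dotZ r (v x : 'Z_r * 'Z_r) : nat := (v.1 * x.1 + v.2 * x.2)%N.

Definition fourier_coef r (T : finType) (A : {set T}) (f : T -> 'Z_r * 'Z_r)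
    (v : 'Z_r * 'Z_r) : algC :=
  \sum_(s in A) zeta r ^+ dotZ v (f s).

Section PrimeModulus.

Variable r : nat.
Hypothesis r_prime : prime r.

Let r_gt1 : (1 < r)%N := prime_gt1 r_prime.

Lemma zeta_prim_root : r.-primitive_root (zeta r).
Proof.
pose w : algC := r.-root (-1); have zetaE : zeta r = w ^+ 2 by [].
have w_r : w ^+ r = -1 by rewrite rootCK // ltnW.
have zeta_r : zeta r ^+ r = 1 by rewrite zetaE -exprM mulnC exprM w_r sqrrN expr1n.
have [m prim_m m_dvd_r] := prim_order_exists (ltnW r_gt1) zeta_r.
case/primeP: r_prime => _ /(_ m m_dvd_r) /orP[/eqP m1 | /eqP m_r].
  2: by rewrite m_r in prim_m.
move: (prim_expr_order prim_m); rewrite m1 expr1 zetaE => /eqP; rewrite sqrf_eq1.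
case/orP=> /eqP w_pm1.
  move: w_r; rewrite w_pm1 expr1n => /eqP.
  by rewrite -subr_eq0 opprK (_ : 1 + 1 = 2%:R) // pnatr_eq0.
by move: (rootC_lt0 (-1 : algC) r_gt1); rewrite -/w w_pm1 ltrN10.
Qed.

Lemma card_Zp_prime : #|'Z_r| = r.
Proof. by rewrite card_ord Zp_cast. Qed.

Lemma ltn_Zp (x : 'Z_r) : (x < r)%N.
Proof. by case: x => x /=; rewrite Zp_cast. Qed.

Lemma Zp_mulE (a b : 'Z_r) : (a * b)%R = (a * b %% r)%N :> nat.
Proof. by rewrite -[X in (_ %% X)%N](Zp_cast r_gt1). Qed.

Lemma sum_zeta_exprM (b : 'Z_r) :
  \sum_(a : 'Z_r) zeta r ^+ (a * b)%N = (b == 0)%:R * r%:R.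
Proof.
have [-> | b_neq0] := eqVneq b 0.
  rewrite (eq_bigr (fun _ => 1)) => [|a _]; last by rewrite muln0.
  by rewrite sumr_const card_Zp_prime mul1r.
set w := zeta r ^+ b.
have w_neq1 : w != 1.
  by rewrite -(prim_order_dvd zeta_prim_root) gtnNdvd ?lt0n ?ltn_Zp.
have w_r : w ^+ r = 1.
  by rewrite -exprM mulnC exprM (prim_expr_order zeta_prim_root) expr1n.
rewrite mul0r (eq_bigr (fun a : 'Z_r => w ^+ a)) => [|a _]; last first.
  by rewrite /w -exprM mulnC.
rewrite -(big_mkord xpredT (GRing.exp w)) Zp_cast // big_mkord; apply/eqP.
move/eqP: w_r; rewrite -subr_eq0 subrX1 mulf_eq0 subr_eq0.
by rewrite (negbTE w_neq1).
Qed.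

Lemma sum_zeta_dotZ (x : 'Z_r * 'Z_r) :
  \sum_(v : 'Z_r * 'Z_r) zeta r ^+ dotZ v x = (x == 0)%:R * (r ^ 2)%:R.
Proof.
rewrite -(pair_bigA _ (fun v1 v2 : 'Z_r => zeta r ^+ dotZ (v1, v2) x)) /=.
under eq_bigr do under eq_bigr do rewrite exprD.
rewrite -big_distrlr /= !sum_zeta_exprM; case: x => x1 x2.
by rewrite xpair_eqE natrX mulrACA -natrM mulnb.
Qed.

Variables (T : finType) (A : {set T}) (f : T -> 'Z_r * 'Z_r).

Lemma fourier_coef0 : fourier_coef A f 0 = #|A|%:R.
Proof. by rewrite /fourier_coef (eq_bigr (fun _ => 1)) ?sumr_const. Qed.

Lemma sum_fourier_coef :
  \sum_v fourier_coef A f v = (r ^ 2 * #|[set s in A | f s == 0]|)%:R.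
Proof.
rewrite exchange_big /= (eq_bigr _ (fun s _ => sum_zeta_dotZ (f s))).
rewrite -big_distrl /= -natr_sum mulrC -natrM; congr (_ * _)%:R.
rewrite -sum1_card big_mkcond [RHS]big_mkcond; apply: eq_bigr => s _.
by rewrite inE; case: (s \in A); case: (f s == 0).
Qed.

Lemma dvdn_card_of_fourier_coef_eq0 :
  (forall v : 'Z_r * 'Z_r, v != 0 -> fourier_coef A f v = 0) ->
  (r ^ 2 %| #|A|)%N.
Proof.
move=> coef_eq0; move: sum_fourier_coef.
rewrite (bigD1 (0 : 'Z_r * 'Z_r)) //= big1 ?addr0 ?fourier_coef0.
  2: by move=> v /coef_eq0.
by move/eqP; rewrite eqr_nat => /eqP ->; apply: dvdn_mulr.
Qed.

Lemma fourier_coef_scale_eq0 (d : 'Z_r) (v : 'Z_r * 'Z_r) : d != 0 ->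
  fourier_coef A f (d * v.1, d * v.2) = 0 -> fourier_coef A f v = 0.
Proof.
move=> d_neq0 coef_dv0.
apply: (sum_prim_root_conj_eq0 (d := d) zeta_prim_root).
  by rewrite coprime_sym prime_coprime // gtnNdvd ?lt0n ?ltn_Zp.
rewrite -[RHS]coef_dv0; apply: eq_bigr => s _.
rewrite -(prim_expr_mod zeta_prim_root) -[RHS](prim_expr_mod zeta_prim_root).
by rewrite /dotZ !Zp_mulE -modnDm !modnMml modnDm mulnDr !mulnA.
Qed.

Lemma unitZp_prime (x : 'Z_r) : x != 0 -> x \is a GRing.unit.
Proof.
move=> x_neq0; rewrite -(natr_Zp x) unitZpE // prime_coprime //.
by rewrite gtnNdvd ?ltn_Zp // lt0n.
Qed.

Lemma Zp2_colinear (v z : 'Z_r * 'Z_r) : v != 0 ->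
  v.1 * z.2 = v.2 * z.1 -> exists d : 'Z_r, z = (d * v.1, d * v.2).
Proof.
case: v z => [v1 v2] [z1 z2] /= v_neq0 det0.
have [v1_0 | v1_neq0] := eqVneq v1 0.
  have v2_unit : v2 \is a GRing.unit.
    by apply: unitZp_prime; move: v_neq0; rewrite v1_0 xpair_eqE eqxx.
  have z1_0 : z1 = 0 by rewrite -(mulKr v2_unit z1) -det0 v1_0 mul0r mulr0.
  by exists (z2 / v2); rewrite v1_0 z1_0 mulr0 divrK.
have v1_unit := unitZp_prime v1_neq0.
exists (z1 / v1); rewrite divrK //; congr (_, _).
by rewrite -(mulKr v1_unit z2) det0 mulrA mulrC mulrA.
Qed.

(* Among more than r points, for every direction v != 0 two of them lie on
   a common line parallel to v. *)
Lemma card_fourier_orthogonal_le (F : {set 'Z_r * 'Z_r}) :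
  {in F &, forall x y : 'Z_r * 'Z_r, x != y -> fourier_coef A f (x - y) = 0} ->
  ~~ (r ^ 2 %| #|A|)%N -> (#|F| <= r)%N.
Proof.
move=> orthF; rewrite leqNgt; apply: contra => F_big.
apply: dvdn_card_of_fourier_coef_eq0 => v v_neq0.
pose det (x : 'Z_r * 'Z_r) := v.1 * x.2 - v.2 * x.1.
have : ~~ dinjectiveb det F.
  apply: contraL F_big => /dinjectiveP det_inj; rewrite -leqNgt.
  by rewrite -(card_in_imset det_inj) -[X in (_ <= X)%N]card_Zp_prime max_card.
case/dinjectivePn => x x_in [y /[!inE] /andP[y_neq_x y_in] det_xy].
have [d xy_eq] : exists d : 'Z_r, x - y = (d * v.1, d * v.2).
  apply: Zp2_colinear => //; apply/eqP; rewrite -subr_eq0.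
  have -> : v.1 * (x - y).2 - v.2 * (x - y).1 = det x - det y.
    by rewrite /det /=; ring.
  by rewrite det_xy subrr.
apply: (fourier_coef_scale_eq0 (d := d)); last by rewrite -xy_eq orthF // eq_sym.
apply: contraNneq y_neq_x => d0.
by rewrite eq_sym -subr_eq0 xy_eq d0 !mul0r.
Qed.

Lemma card_fibred_orthogonal_le (K U : finType) (L : {set U})
    (base : U -> K) (fibre : U -> 'Z_r * 'Z_r) :
  {in L &, forall l l', base l = base l' -> l != l' ->
     fourier_coef A f (fibre l - fibre l') = 0} ->
  ~~ (r ^ 2 %| #|A|)%N -> (#|L| <= #|K| * r)%N.
Proof.
move=> orthL r2_ndvd.
have -> : #|L| = (\sum_k #|[set l in L | base l == k]|)%N.
  rewrite -sum1_card (partition_big base xpredT) //=; apply: eq_bigr => k _.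
  by rewrite -sum1_card; apply: eq_bigl => l; rewrite inE.
rewrite -sum_nat_const; apply: leq_sum => k _.
set Lk := [set l in L | base l == k].
have Lk_base l l' : l \in Lk -> l' \in Lk -> base l = base l'.
  by rewrite !inE => /andP[_ /eqP ->] /andP[_ /eqP ->].
have Lk_sub l : l \in Lk -> l \in L by rewrite inE => /andP[].
have fibre_inj : {in Lk &, injective fibre}.
  move=> l l' l_in l'_in; apply: contra_eq => l_neq_l'.
  apply: contra r2_ndvd => /eqP fibre_eq.
  have := orthL l l' (Lk_sub l l_in) (Lk_sub l' l'_in).
  move/(_ (Lk_base l l' l_in l'_in) l_neq_l').
  by rewrite fibre_eq subrr fourier_coef0 => /eqP; rewrite pnatr_eq0 => /eqP ->.
rewrite -(card_in_imset fibre_inj); apply: card_fourier_orthogonal_le => //.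
move=> _ _ /imsetP[l l_in ->] /imsetP[l' l'_in ->] fibre_neq.
apply: orthL; [exact: Lk_sub | exact: Lk_sub | exact: Lk_base |].
by apply: contraNneq fibre_neq => ->.
Qed.

End PrimeModulus.

Definition orthogonal_set p q (L S : {set G p q}) : Prop :=
  {in L &, forall l l', l != l' -> chiS (l - l') S = 0}.

Lemma chiE p q (w x : G p q) :
  chi w x = zeta p ^+ dotZ w.1 x.1 * zeta q ^+ dotZ w.2 x.2.
Proof. by []. Qed.

Lemma chiS_sub_fst_eq p q (l l' : G p q) (S : {set G p q}) :
  l.1 = l'.1 -> chiS (l - l') S = fourier_coef S snd (l.2 - l'.2).
Proof.
move=> eq1; apply: eq_bigr => s _.
by rewrite chiE -[(l - l').1]/(l.1 - l'.1) eq1 subrr mul1r.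
Qed.

Lemma chiS_sub_snd_eq p q (l l' : G p q) (S : {set G p q}) :
  l.2 = l'.2 -> chiS (l - l') S = fourier_coef S fst (l.1 - l'.1).
Proof.
move=> eq2; apply: eq_bigr => s _.
by rewrite chiE -[(l - l').2]/(l.2 - l'.2) eq2 subrr mulr1.
Qed.

Lemma card_Zp2_prime r : prime r -> #|{: 'Z_r * 'Z_r}| = (r * r)%N.
Proof. by move=> r_pr; rewrite card_prod card_Zp_prime. Qed.

Section OrthogonalSet.

Variables (p q : nat) (L S : {set G p q}).
Hypotheses (p_prime : prime p) (q_prime : prime q) (orthL : orthogonal_set L S).

Lemma card_orthogonal_set_le_ppq :
  ~~ (q ^ 2 %| #|S|)%N -> (#|L| <= p * p * q)%N.
Proof.
rewrite -card_Zp2_prime //.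
apply: (card_fibred_orthogonal_le q_prime (f := snd) (base := fst) (fibre := snd)).
move=> l l' l_in l'_in fst_eq l_neq.
by rewrite -(chiS_sub_fst_eq S fst_eq); exact: orthL l_in l'_in l_neq.
Qed.

Lemma card_orthogonal_set_le_qqp :
  ~~ (p ^ 2 %| #|S|)%N -> (#|L| <= q * q * p)%N.
Proof.
rewrite -card_Zp2_prime //.
apply: (card_fibred_orthogonal_le p_prime (f := fst) (base := snd) (fibre := fst)).
move=> l l' l_in l'_in snd_eq l_neq.
by rewrite -(chiS_sub_snd_eq S snd_eq); exact: orthL l_in l'_in l_neq.
Qed.

End OrthogonalSet.

Lemma sq_ndvdn_of_gcdn p q n : prime p -> prime q -> p != q ->
  gcdn n (p ^ 2 * q ^ 2) = (p * q)%N -> ~~ (q ^ 2 %| n)%N.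
Proof.
move=> p_pr q_pr p_neq_q gcd_n; apply: contraTN isT => q2_dvd_n.
have : (q * q %| p * q)%N by rewrite -gcd_n dvdn_gcd mulnn q2_dvd_n dvdn_mull.
by rewrite dvdn_pmul2r ?prime_gt0 // dvdn_prime2 // eq_sym (negbTE p_neq_q).
Qed.

Lemma gcdn_pq_minn_neq p q : prime p -> prime q ->
  gcdn (p * q * minn p q) (p ^ 2 * q ^ 2) != (p * q)%N.
Proof.
move=> p_pr q_pr; have min_dvd : (minn p q %| p * q)%N.
  by rewrite /minn; case: ifP => _; [apply: dvdn_mulr | apply: dvdn_mull].
rewrite (gcdn_idPl _); last by rewrite -!mulnn mulnACA dvdn_mul.
rewrite -[X in _ != X]muln1 eqn_pmul2l ?muln_gt0 ?prime_gt0 //.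
by rewrite neq_ltn leq_min !prime_gt1 ?orbT.
Qed.

Local Close Scope ring_scope.

Theorem lemma4p4 (p q : nat) (S : {set G p q}) :
  prime p -> prime q -> p != q ->
  gcdn #|S| (p ^ 2 * q ^ 2) = p * q ->
  p * q * minn p q <= #|S| ->
  ~ spectral S.
Proof.
move=> p_pr q_pr p_neq_q gcd_S size_S [L [card_L orthL]].
have le_ppq : #|S| <= p * p * q.
  rewrite -card_L; apply: (card_orthogonal_set_le_ppq p_pr q_pr orthL).
  exact: sq_ndvdn_of_gcdn p_pr q_pr p_neq_q gcd_S.
have le_qqp : #|S| <= q * q * p.
  rewrite -card_L; apply: (card_orthogonal_set_le_qqp p_pr q_pr orthL).
  apply: sq_ndvdn_of_gcdn q_pr p_pr _ _; first by rewrite eq_sym.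
  by rewrite mulnC gcd_S mulnC.
have card_S : #|S| = p * q * minn p q.
  apply/eqP; rewrite eqn_leq size_S andbT /minn.
  by case: ifP => _; [rewrite mulnAC | rewrite [p * q]mulnC mulnAC].
by move: (gcdn_pq_minn_neq p_pr q_pr); rewrite -card_S gcd_S eqxx.
Qed.
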